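(* Let $(\mathcal{A},\mathbf{m})$ be a multiarrangement in $\mathbb{Q}^l$ with $\mathcal{A}=\{H_1,\dots,H_n\}$, $H_i=\alpha_i^{-1}(0)$, where the $\alpha_i\in S_\mathbb{Z}=\mathbb{Z}[x_1,\dots,x_l]$ are linear forms such that no prime number divides any $\alpha_i$, and let $p$ be a good prime for $(\mathcal{A},\mathbf{m})$. If $p$ is not a zero divisor of $\operatorname{coker}(\varphi_\mathbb{Z})$, then the map $\pi_p^l\colon\operatorname{Ker}(\varphi_\mathbb{Z})\to D(\mathcal{A}_p,\mathbf{m})$ is surjective.
   Context: For a field $\mathbb{K}$ and $R=\mathbb{K}[x_1,\dots,x_l]$, for a multiarrangement with hyperplanes $\beta_i^{-1}(0)$ and multiplicities $\mathbf{m}_i\ge0$, $D=\{\delta=\sum_j f_j\partial_{x_j}: f_j\in R,\ \delta(\beta_i)\in\beta_i^{\mathbf{m}_i}R\ \forall i\}$, identified with a submodule of $R^l$. Let $S_p=\mathbb{F}_p[x_1,\dots,x_l]$, $\pi_p\colon S_\mathbb{Z}\to S_p$ reduction mod $p$, $\pi_p^k$ its componentwise extension to $S_\mathbb{Z}^k\to S_p^k$. A prime $p$ is good if $\pi_p(\alpha_i)\ne\pi_p(\alpha_j)$ for $i\ne j$; then $(\mathcal{A}_p,\mathbf{m})$ is the multiarrangement in $\mathbb{F}_p^l$ with hyperplanes $\pi_p(\alpha_i)^{-1}(0)$ of multiplicities $\mathbf{m}(H_i)$. Let $M(\mathcal{A},\mathbf{m})\subseteq S_\mathbb{Z}^n$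 be generated by $\alpha_i^{\mathbf{m}(H_i)}e_i$, $A(\mathcal{A})=(\partial\alpha_i/\partial x_j)_{i,j}$, and $\varphi_\mathbb{Z}\colon S_\mathbb{Z}^l\to S_\mathbb{Z}^n/M(\mathcal{A},\mathbf{m})$, $g\mapsto A(\mathcal{A})g$. The integer $p$ is a zero divisor of an $S_\mathbb{Z}$-module $N$ if $pv=0$ for some nonzero $v\in N$. *)

From HB Require Import structures.
From mathcomp Require Import all_boot all_order all_algebra.
From mathcomp Require Import mpoly.
Set Implicit Arguments. Unset Strict Implicit. Unset Printing Implicit Defensive.
Import Order.TTheory GRing.Theory Num.Theory.
Local Open Scope ring_scope.

(* S_Z = {mpoly int[l]},  S_p = {mpoly 'F_p[l]}, S_Q = {mpoly rat[l]}. *)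

Definition rdvd (R : comNzRingType) (g f : R) : Prop := exists q : R, f = q * g.

Definition is_linear_form (R : comNzRingType) (l : nat) (beta : {mpoly R[l]}) : Prop :=
  exists c : 'I_l -> R, beta = \sum_(j < l) c j *: 'X_j.

Definition deriv_apply (R : comNzRingType) (l : nat) (f : 'I_l -> {mpoly R[l]})
  (beta : {mpoly R[l]}) : {mpoly R[l]} :=
  \sum_(j < l) f j * mderiv j beta.

(* The module of logarithmic derivations D(beta, m) (as a predicate on R^l). *)
Definition logder (R : comNzRingType) (l n : nat) (beta : 'I_n -> {mpoly R[l]})
  (m : 'I_n -> nat) (f : 'I_l -> {mpoly R[l]}) : Prop :=
  forall i : 'I_n, rdvd (beta i ^+ m i) (deriv_apply f (beta i)).

Definition redp (p l : nat) (f : {mpoly int[l]}) : {mpoly 'F_p[l]} :=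
  map_mpoly (fun z : int => z%:~R) f.

Definition Amat (l n : nat) (alpha : 'I_n -> {mpoly int[l]}) (i : 'I_n) (j : 'I_l)
  : {mpoly int[l]} := mderiv j (alpha i).

(* v in S_Z^n lies in  M(A,m) + Im(g |-> A(A) g), i.e. v = 0 in coker(phi_Z). *)
Definition in_im_phi (l n : nat) (alpha : 'I_n -> {mpoly int[l]}) (m : 'I_n -> nat)
  (v : 'I_n -> {mpoly int[l]}) : Prop :=
  exists (g : 'I_l -> {mpoly int[l]}) (c : 'I_n -> {mpoly int[l]}),
    forall i : 'I_n, v i = \sum_(j < l) Amat alpha i j * g j + c i * alpha i ^+ m i.

Definition zero_divisor_coker (l n : nat) (alpha : 'I_n -> {mpoly int[l]})
  (m : 'I_n -> nat) (p : nat) : Prop :=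
  exists v : 'I_n -> {mpoly int[l]},
    ~ in_im_phi alpha m v /\ in_im_phi alpha m (fun i => p%:R * v i).

Definition in_ker_phi (l n : nat) (alpha : 'I_n -> {mpoly int[l]}) (m : 'I_n -> nat)
  (g : 'I_l -> {mpoly int[l]}) : Prop :=
  forall i : 'I_n, rdvd (alpha i ^+ m i) (\sum_(j < l) Amat alpha i j * g j).

Definition hyperplaneQ (l : nat) (alpha : {mpoly int[l]}) (v : 'I_l -> rat) : Prop :=
  (map_mpoly (fun z : int => z%:~R : rat) alpha).@[v] = 0.

Definition good_prime (l n : nat) (alpha : 'I_n -> {mpoly int[l]}) (p : nat) : Prop :=
  forall i j : 'I_n, i != j -> redp p (alpha i) != redp p (alpha j).

From HB Require Import structures.
From mathcomp Require Import all_boot all_order all_algebra.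
From mathcomp Require Import mpoly.
From mathcomp Require Import ring.
From Stdlib Require Import Classical.
Set Implicit Arguments. Unset Strict Implicit. Unset Printing Implicit Defensive.
Import Order.TTheory GRing.Theory Num.Theory.
Local Open Scope ring_scope.

(** Lift [delta] coefficientwise to [g0] over [Z].  Reducing mod [p], the
    divisibility conditions defining [D(A_p, m)] say that
    [A g0 = c alpha^m + p w] for some [c] and [w], i.e. [p [w] = 0] in
    [coker(phi_Z)].  As [p] is not a zero divisor there, [w = A h + e alpha^m],
    and then [g0 - p h] lies in [Ker(phi_Z)] and still reduces to [delta]. *)

HB.instance Definition _ (p l : nat) :=
  GRing.RMorphism.copy (@redp p l) (map_mpoly ( *~%R (1 : 'F_p))).

Section Reduction.
Variables (p l : nat).
Hypothesis p_pr : prime p.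

Definition liftFp (f : {mpoly 'F_p[l]}) : {mpoly int[l]} :=
  \sum_(k <- msupp f) (nat_of_ord f@_k)%:Z *: 'X_[k].

Lemma redp_liftFp f : redp p (liftFp f) = f.
Proof.
rewrite /liftFp rmorph_sum [RHS]mpolyE.
apply: eq_bigr => k _; rewrite /= /redp map_mpolyZ map_mpolyX /=.
by congr (_ *: _); exact: natr_Zp.
Qed.

Lemma Fp_intr_eq0 (z : int) : (z%:~R : 'F_p) = 0 -> (Posz p %| z)%Z.
Proof.
have Fp_nat_eq0 k : (k%:R : 'F_p) = 0 -> (p %| k)%N.
  by move=> k0; have := val_Fp_nat p_pr k; rewrite k0 /dvdn => <-.
case: z => k; first by move/Fp_nat_eq0; rewrite dvdzE.
by rewrite NegzE mulrNz => /eqP; rewrite oppr_eq0 => /eqP /Fp_nat_eq0.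
Qed.

Lemma redp_eq0 (f : {mpoly int[l]}) :
  redp p f = 0 -> rdvd (p%:R : {mpoly int[l]}) f.
Proof.
move=> f0; exists (\sum_(k <- msupp f) (f@_k %/ p)%Z *: 'X_[k]).
rewrite mulr_suml {1}[f]mpolyE; apply: eq_bigr => k _.
have pfk : (Posz p %| f@_k)%Z.
  by apply: Fp_intr_eq0; rewrite -mcoeff_map_mpoly -/(redp p f) f0 mcoeff0.
by rewrite -{1}(divzK pfk) mulr_natr scalerMnl -mulr_natr natz.
Qed.

Lemma redp_natpM (f : {mpoly int[l]}) : redp p (p%:R * f) = 0.
Proof.
by rewrite rmorphM rmorph_nat -mpolyC_nat pchar_Fp_0 // mpolyC0 mul0r.
Qed.

Lemma redp_mderiv i (f : {mpoly int[l]}) : redp p (mderiv i f) = mderiv i (redp p f).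
Proof.
apply/mpolyP => k.
by rewrite /redp mcoeff_map_mpoly !mcoeff_mderiv mcoeff_map_mpoly raddfMn.
Qed.

Lemma redp_deriv_apply (g : 'I_l -> {mpoly int[l]}) (beta : {mpoly int[l]}) :
  redp p (deriv_apply g beta) = deriv_apply (fun j => redp p (g j)) (redp p beta).
Proof.
rewrite /deriv_apply rmorph_sum; apply: eq_bigr => j _.
by rewrite rmorphM /= redp_mderiv.
Qed.

End Reduction.

Section Cokernel.
Variables (l n : nat) (alpha : 'I_n -> {mpoly int[l]}) (m : 'I_n -> nat).

Lemma in_im_phi_cancel (p : nat) (w : 'I_n -> {mpoly int[l]}) :
  ~ zero_divisor_coker alpha m p ->
  in_im_phi alpha m (fun i => p%:R * w i) -> in_im_phi alpha m w.
Proof. by move=> nzd pw; apply: NNPP => w'; apply: nzd; exists w. Qed.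

Lemma in_ker_phi_correction (k : {mpoly int[l]}) (g0 h : 'I_l -> {mpoly int[l]})
    (c e w : 'I_n -> {mpoly int[l]}) :
  (forall i, \sum_(j < l) Amat alpha i j * g0 j = c i * alpha i ^+ m i + k * w i) ->
  (forall i, w i = \sum_(j < l) Amat alpha i j * h j + e i * alpha i ^+ m i) ->
  in_ker_phi alpha m (fun j => g0 j - k * h j).
Proof.
move=> Ag0 Ah i; exists (c i + k * e i).
have -> : \sum_(j < l) Amat alpha i j * (g0 j - k * h j)
    = \sum_(j < l) Amat alpha i j * g0 j - k * \sum_(j < l) Amat alpha i j * h j.
  by rewrite mulr_sumr -sumrB; apply: eq_bigr => j _; rewrite mulrBr mulrCA.
rewrite Ag0 (_ : \sum_(j < l) _ = w i - e i * alpha i ^+ m i); last first.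
  by rewrite Ah addrK.
ring.
Qed.

Lemma logder_lift_residue (p : nat) (delta : 'I_l -> {mpoly 'F_p[l]}) :
  prime p -> logder (fun i => redp p (alpha i)) m delta ->
  exists c w : 'I_n -> {mpoly int[l]}, forall i,
    \sum_(j < l) Amat alpha i j * liftFp (delta j) = c i * alpha i ^+ m i + p%:R * w i.
Proof.
move=> p_pr /fin_all_exists [q Dq].
pose c i := liftFp (q i); exists c.
suff /fin_all_exists [w Dw] : forall i, rdvd p%:R
    (\sum_(j < l) Amat alpha i j * liftFp (delta j) - c i * alpha i ^+ m i).
  by exists w => i; rewrite [p%:R * _]mulrC -Dw addrC subrK.
move=> i; apply: redp_eq0 => //.
have -> : \sum_(j < l) Amat alpha i j * liftFp (delta j)
    = deriv_apply (fun j => liftFp (delta j)) (alpha i).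
  by apply: eq_bigr => j _; rewrite mulrC.
rewrite rmorphB rmorphM rmorphXn /= redp_deriv_apply.
under [deriv_apply _ _]eq_bigr do rewrite redp_liftFp.
by rewrite -/(deriv_apply delta _) /c redp_liftFp Dq subrr.
Qed.

End Cokernel.

Theorem proposition4p3 (l n : nat) (alpha : 'I_n -> {mpoly int[l]})
  (m : 'I_n -> nat) (p : nat) :
  (forall i : 'I_n, is_linear_form (alpha i)) ->
  (* the hyperplanes H_i = alpha_i^{-1}(0) in Q^l are pairwise distinct *)
  (forall i j : 'I_n, i != j ->
     ~ (forall v : 'I_l -> rat, hyperplaneQ (alpha i) v <-> hyperplaneQ (alpha j) v)) ->
  (* no prime number divides any alpha_i *)
  (forall (q : nat) (i : 'I_n), prime q -> ~ rdvd (q%:R : {mpoly int[l]}) (alpha i)) ->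
  prime p ->
  good_prime alpha p ->
  ~ zero_divisor_coker alpha m p ->
  forall delta : 'I_l -> {mpoly 'F_p[l]},
    logder (fun i => redp p (alpha i)) m delta ->
    exists g : 'I_l -> {mpoly int[l]},
      in_ker_phi alpha m g /\ (forall j : 'I_l, redp p (g j) = delta j).
Proof.
move=> _ _ _ p_pr _ nzd delta delta_log.
have [c [w Ag0]] := logder_lift_residue p_pr delta_log.
have [h [e Ah]] : in_im_phi alpha m w.
  apply: in_im_phi_cancel nzd _.
  exists (fun j => liftFp (delta j)), (fun i => - c i) => i.
  by rewrite Ag0 mulNr addrAC subrr add0r.
exists (fun j => liftFp (delta j) - p%:R * h j); split.
  exact: in_ker_phi_correction Ag0 Ah.
by move=> j; rewrite rmorphB /= redp_natpM // subr0 redp_liftFp.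
Qed.
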